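(* Let $f\colon\underline I=I_1\times\cdots\times I_n\to\mathbb R$ be a convex and separately increasing function ($I_i$ intervals), and let $H$ be a finite-dimensional Hilbert space. Let $\underline x=(x_1,\dots,x_n)$ and $\underline y=(y_1,\dots,y_n)$ be abelian $n$-tuples of self-adjoint operators on $H$ with $\sigma(x_i),\sigma(y_i)\subseteq I_i$ for all $i$. If $x_i\le y_i$ for $i=1,\dots,n$, then $f(\underline x)\prec_w f(\underline y)$.
   Context: Separately increasing means increasing in each variable when the others are held fixed. An $n$-tuple is abelian if its entries commute; $f$ of an abelian tuple of self-adjoint operators is defined by joint functional calculus. For a self-adjoint operator $x$ on an $m$-dimensional Hilbert space, $x_{[1]}\ge\cdots\ge x_{[m]}$ are its eigenvalues counted with multiplicity in decreasing order, and $x\prec_w y$ means $\sum_{i=1}^k x_{[i]}\le\sum_{i=1}^k y_{[i]}$ for $k=1,\dots,m$. *)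

(* real numbers R : realType, complex numbers R[i]
   (mathcomp-real-closed), matrices over R[i] model operators on the
   m-dimensional Hilbert space C^m. *)
From mathcomp Require Import all_boot all_order all_algebra.
From mathcomp Require Import reals.
From mathcomp.real_closed Require Import complex.

Set Implicit Arguments.
Unset Strict Implicit.
Unset Printing Implicit Defensive.

Import Order.TTheory GRing.Theory Num.Theory.
Local Open Scope ring_scope.
Local Open Scope complex_scope.
Local Open Scope sesquilinear_scope.

Definition selfadjoint (R : realType) (m : nat) (x : 'M[R[i]]_m) : Prop :=
  x ^t* = x.

Definition abelian_tuple (R : realType) (n m : nat) (xs : 'I_n -> 'M[R[i]]_m) : Prop :=
  forall i j, xs i *m xs j = xs j *m xs i.

Definition spec_in (R : realType) (m : nat) (x : 'M[R[i]]_m) (I : interval R) : Prop :=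
  forall a : R[i], eigenvalue x a -> exists2 r : R, a = r%:C & r \in I.

Definition loewner_le (R : realType) (m : nat) (x y : 'M[R[i]]_m) : Prop :=
  forall v : 'rV[R[i]]_m, 0 <= (v *m (y - x) *m v ^t*) 0 0.

Definition in_box (R : realType) (n : nat) (I : 'I_n -> interval R) (u : 'rV[R]_n) : Prop :=
  forall i, u 0 i \in I i.

Definition convex_on_box (R : realType) (n : nat) (I : 'I_n -> interval R)
  (f : 'rV[R]_n -> R) : Prop :=
  forall (u v : 'rV[R]_n) (t : R), in_box I u -> in_box I v -> 0 <= t <= 1 ->
    f (t *: u + (1 - t) *: v) <= t * f u + (1 - t) * f v.

Definition sep_increasing (R : realType) (n : nat) (I : 'I_n -> interval R)
  (f : 'rV[R]_n -> R) : Prop :=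
  forall (u : 'rV[R]_n) (i : 'I_n) (s t : R), in_box I u ->
    s \in I i -> t \in I i -> s <= t ->
    f (\row_j (if j == i then s else u 0 j)) <= f (\row_j (if j == i then t else u 0 j)).

(* joint functional calculus: z = f(xs) for the abelian tuple xs of self-adjoint
   operators, i.e. xs i = U^* diag(d_i) U for a common unitary U and real
   diagonals d_i, and z = U^* diag(k |-> f(d_1 k, ..., d_n k)) U. *)
Definition joint_fcalc (R : realType) (n m : nat) (f : 'rV[R]_n -> R)
  (xs : 'I_n -> 'M[R[i]]_m) (z : 'M[R[i]]_m) : Prop :=
  exists (U : 'M[R[i]]_m) (d : 'I_n -> 'rV[R]_m),
    U \is unitarymx /\
    (forall i, xs i = U ^t* *m diag_mx (map_mx (@real_complex R) (d i)) *m U) /\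
    z = U ^t* *m diag_mx (\row_k (f (\row_i d i 0 k))%:C) *m U.

Definition eigs_desc (R : realType) (m : nat) (x : 'M[R[i]]_m) (s : seq R) : Prop :=
  size s = m /\ sorted (fun a b : R => b <= a) s /\
  char_poly x = \prod_(a <- s) ('X - (a%:C)%:P).

Definition weak_major (R : realType) (m : nat) (x y : 'M[R[i]]_m) : Prop :=
  forall s t : seq R, eigs_desc x s -> eigs_desc y t ->
    forall k : nat, (1 <= k <= m)%N ->
      \sum_(i < k) s`_i <= \sum_(i < k) t`_i.

From mathcomp Require Import all_boot all_order all_algebra.
From mathcomp Require Import reals.
From mathcomp.real_closed Require Import complex.
From mathcomp Require Import fingroup perm ring lra.
Import Order.TTheory GRing.Theory Num.Theory.

(* Write x_i = U^* diag(a_i) U and y_i = V^* diag(b_i) V; the matrix P with entries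
   |W_(j,l)|^2, where W = U V^* is unitary, is doubly stochastic.  Testing x_i <= y_i
   on the j-th row of U gives a_i(j) <= sum_l P_(j,l) b_i(l), so monotonicity of f and
   Jensen's inequality give f(a(j)) <= sum_l P_(j,l) f(b(l)): the eigenvalues alpha of
   f(x) are entrywise dominated by P applied to the eigenvalues beta of f(y).  For
   theta the k-th largest entry of beta and weights 0 <= c_l <= 1 summing to k,
   sum_l c_l beta_l <= k theta + sum_l (beta_l - theta)^+, which is the sum of the k
   largest entries of beta; taking for c the sum of k rows of P bounds any k entries
   of alpha. *)

Set Implicit Arguments.
Unset Strict Implicit.
Unset Printing Implicit Defensive.

Local Open Scope ring_scope.

Section IntervalConvexity.
Variable R : realDomainType.
Implicit Types (I : interval R) (a b t z : R).

Lemma mem_itv_between I a b z : a \in I -> b \in I -> a <= z <= b -> z \in I.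
Proof.
case: I => bl br; rewrite !itv_boundlr => /andP[la _] /andP[_ rb] /andP[az zb].
by rewrite (le_trans la) ?(le_trans _ rb) ?leBSide.
Qed.

Lemma mem_itv_convex I a b t : a \in I -> b \in I -> 0 <= t <= 1 ->
  t * a + (1 - t) * b \in I.
Proof.
move=> aI bI /andP[t0 t1].
have [ab|ba] := leP a b.
  by apply: (mem_itv_between aI bI); apply/andP; split; nra.
by apply: (mem_itv_between bI aI); apply/andP; split; nra.
Qed.

End IntervalConvexity.

Section ConvexIncreasingOnBox.
Variables (R : realType) (n : nat) (I : 'I_n -> interval R) (f : 'rV[R]_n -> R).

Lemma in_box_convex (u v : 'rV[R]_n) t :
  in_box I u -> in_box I v -> 0 <= t <= 1 -> in_box I (t *: u + (1 - t) *: v).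
Proof. by move=> uI vI t01 i; rewrite !mxE; apply: mem_itv_convex. Qed.

Lemma jensen_box (T : eqType) (r : seq T) (p : T -> R) (v : T -> 'rV[R]_n) :
  convex_on_box I f ->
  (forall l, 0 <= p l) -> (forall l, in_box I (v l)) -> \sum_(l <- r) p l = 1 ->
  in_box I (\sum_(l <- r) p l *: v l) /\
  f (\sum_(l <- r) p l *: v l) <= \sum_(l <- r) p l * f (v l).
Proof.
move=> f_cvx; elim: r p => [|a r IHr] p p_ge0 vI.
  by rewrite big_nil => /esym/eqP; rewrite oner_eq0.
rewrite !big_cons; set S := \sum_(l <- r) p l => pS1.
have S_ge0 : 0 <= S by rewrite sumr_ge0.
have [S0|S_neq0] := eqVneq S 0.
  have p0 l : l \in r -> p l = 0.
    by move=> lr; apply/eqP; move: S0 => /eqP; rewrite psumr_eq0 // => /allP /(_ l lr).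
  have pa1 : p a = 1 by rewrite -pS1 -/S S0 addr0.
  rewrite !big_seq !big1 => [|l /p0 ->|l /p0 ->]; rewrite ?scale0r ?mul0r //.
  by rewrite pa1 scale1r mul1r !addr0.
pose q l := p l / S.
have [qrI fq] : in_box I (\sum_(l <- r) q l *: v l) /\
                f (\sum_(l <- r) q l *: v l) <= \sum_(l <- r) q l * f (v l).
  by apply: IHr => // [l|]; rewrite ?divr_ge0 // -mulr_suml divff.
have pa_S : S = 1 - p a by rewrite -pS1 addrAC subrr add0r.
have pa01 : 0 <= p a <= 1 by rewrite p_ge0 -subr_ge0 -pa_S.
have -> : \sum_(l <- r) p l *: v l = (1 - p a) *: \sum_(l <- r) q l *: v l.
  by rewrite -pa_S scaler_sumr; apply: eq_bigr => l _; rewrite scalerA mulrCA divff ?mulr1.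
have -> : \sum_(l <- r) p l * f (v l) = (1 - p a) * \sum_(l <- r) q l * f (v l).
  by rewrite -pa_S mulr_sumr; apply: eq_bigr => l _; rewrite mulrA mulrCA divff ?mulr1.
split; first exact: in_box_convex.
apply: le_trans (f_cvx _ _ _ (vI a) qrI pa01) _.
by rewrite lerD2l ler_wpM2l // -pa_S.
Qed.

Lemma sep_increasing_le (u v : 'rV[R]_n) :
  sep_increasing I f -> in_box I u -> in_box I v ->
  (forall i, u 0 i <= v 0 i) -> f u <= f v.
Proof.
move=> f_inc uI vI uv.
pose w k := \row_(j < n) (if (j < k)%N then v 0 j else u 0 j).
have wI k : in_box I (w k) by move=> j; rewrite mxE; case: ifP.
have -> : u = w 0%N by apply/rowP => j; rewrite mxE.
have -> : v = w n by apply/rowP => j; rewrite mxE ltn_ord.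
suff : forall k, (k <= n)%N -> f (w 0%N) <= f (w k) by apply.
elim=> [|k IHk] kn //; apply: le_trans (IHk (ltnW kn)) _.
have := f_inc (w k) (Ordinal kn) _ _ (wI k) (uI _) (vI _) (uv _).
congr (f _ <= f _); apply/rowP => j; rewrite !mxE.
  by case: eqP => [->|_]; rewrite ?ltnn.
case: eqP => [->|jk]; rewrite ?ltnSn // [in RHS]ltnS [in RHS]leq_eqVlt.
by case: eqP => // jk'; case: jk; apply: val_inj.
Qed.

Lemma sep_increasing_convex_le_mean (T : eqType) (r : seq T) (p : T -> R)
    (u : 'rV[R]_n) (v : T -> 'rV[R]_n) :
  convex_on_box I f -> sep_increasing I f ->
  (forall l, 0 <= p l) -> \sum_(l <- r) p l = 1 ->
  in_box I u -> (forall l, in_box I (v l)) ->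
  (forall i, u 0 i <= \sum_(l <- r) p l * v l 0 i) ->
  f u <= \sum_(l <- r) p l * f (v l).
Proof.
move=> f_cvx f_inc p_ge0 p1 uI vI uv.
have [meanI f_mean] := jensen_box f_cvx p_ge0 vI p1.
apply: le_trans f_mean; apply: sep_increasing_le => // i.
by rewrite summxE; under eq_bigr do rewrite !mxE; apply: uv.
Qed.

End ConvexIncreasingOnBox.

Section DoublyStochastic.
Variables (R : realDomainType) (m : nat).

Definition doubly_stochastic (P : 'I_m -> 'I_m -> R) :=
  [/\ forall j l, 0 <= P j l, forall j, \sum_l P j l = 1 & forall l, \sum_j P j l = 1].

(* Only the entries of [t] above its k-th largest entry [t`_k.-1] have nonzero positive part. *)
Lemma sum_topk_pivot (t : seq R) (k : nat) :
  size t = m -> sorted >=%R t -> (1 <= k <= m)%N ->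
  \sum_(i < k) t`_i = k%:R * t`_k.-1 + \sum_(x <- t) Num.max (x - t`_k.-1) 0.
Proof.
move=> tm t_sorted /andP[k_gt0 km].
set th := t`_k.-1.
have k1m : (k.-1 < m)%N by rewrite prednK.
have t_le i j : (i <= j < m)%N -> t`_j <= t`_i.
  move=> /andP[ij jm]; apply: (sorted_leq_nth ge_trans _ 0 t_sorted) => //.
  - exact: lexx.
  - by rewrite inE tm (leq_ltn_trans ij).
  - by rewrite inE tm.
rewrite (big_nth 0) big_mkord tm (bigID (fun i : 'I_m => (i < k)%N)) /=.
rewrite [X in _ + (_ + X)]big1 => [|i]; last first.
  rewrite -leqNgt => ki; apply/max_idPr.
  by rewrite subr_le0 t_le // (leq_trans (leq_pred k) ki) ltn_ord.
rewrite addr0 -(big_ord_widen m (fun i => Num.max (t`_i - th) 0) km).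
have -> : k%:R * th = \sum_(i < k) th by rewrite sumr_const card_ord mulr_natl.
rewrite -big_split /=.
apply: eq_bigr => i _; rewrite max_l; first by rewrite addrC subrK.
by rewrite subr_ge0 t_le // -ltnS prednK // ltn_ord.
Qed.

Lemma weighted_sum_le_topk (c b : 'I_m -> R) (t : seq R) (k : nat) :
  (forall l, 0 <= c l <= 1) -> \sum_l c l = k%:R ->
  sorted >=%R t -> perm_eq t [seq b l | l <- enum 'I_m] -> (1 <= k <= m)%N ->
  \sum_l c l * b l <= \sum_(i < k) t`_i.
Proof.
move=> c01 ck t_sorted tb km.
have tm : size t = m by rewrite (perm_size tb) size_map size_enum_ord.
rewrite (sum_topk_pivot tm t_sorted km); set th := t`_k.-1.
have -> : \sum_l c l * b l = k%:R * th + \sum_l c l * (b l - th).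
  by rewrite -ck mulr_suml -big_split; apply: eq_bigr => l _ /=; rewrite mulrBr addrC subrK.
rewrite lerD2l (perm_big _ tb) big_map big_enum /=; apply: ler_sum => l _.
have /andP[c_ge0 c_le1] := c01 l.
have [bth|bth] := leP 0 (b l - th); first by rewrite ler_piMl.
by rewrite mulr_ge0_le0 // ltW.
Qed.

Lemma doubly_stochastic_weak_major (P : 'I_m -> 'I_m -> R) (a b : 'I_m -> R)
    (s t : seq R) (k : nat) :
  doubly_stochastic P -> (forall j, a j <= \sum_l P j l * b l) ->
  perm_eq s [seq a j | j <- enum 'I_m] ->
  sorted >=%R t -> perm_eq t [seq b l | l <- enum 'I_m] ->
  (1 <= k <= m)%N -> \sum_(i < k) s`_i <= \sum_(i < k) t`_i.
Proof.
move=> [P_ge0 P_row P_col] aPb sa t_sorted tb km.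
have [p ->] : exists p : 'S_m, s = [tuple tnth [tuple a j | j < m] (p i) | i < m].
  by apply/tuple_permP.
have km' : (k <= m)%N by case/andP: km.
pose c l := \sum_(i : 'I_m | (i < k)%N) P (p i) l.
apply: (@le_trans _ _ (\sum_l c l * b l)); last apply: weighted_sum_le_topk => //.
- rewrite (big_ord_widen m (fun i => _`_i) km') /c.
  under [X in _ <= X]eq_bigr do rewrite mulr_suml.
  rewrite exchange_big /=; apply: ler_sum => i _.
  by rewrite (nth_map i) ?size_enum_ord // nth_ord_enum tnth_mktuple.
- move=> l; rewrite sumr_ge0 //= -(P_col l) (reindex_inj (@perm_inj _ p)) /=.
  by rewrite [X in _ <= X](bigID (fun i : 'I_m => (i < k)%N)) lerDl sumr_ge0.
- rewrite /c exchange_big /= (eq_bigr (fun _ => 1)) => [|i _]; last exact: P_row.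
  by rewrite -(big_ord_widen m (fun _ => 1 : R) km') sumr_const card_ord.
Qed.

End DoublyStochastic.

Lemma char_poly_conj (R : comUnitRingType) (k : nat) (P A : 'M[R]_k) :
  P \in unitmx -> char_poly (invmx P *m A *m P) = char_poly A.
Proof.
move=> P_unit; have PVP := mulVmx P_unit.
rewrite /char_poly; have -> : char_poly_mx (invmx P *m A *m P) =
    map_mx polyC (invmx P) *m char_poly_mx A *m map_mx polyC P.
  rewrite /char_poly_mx mulmxBr mulmxBl mul_mx_scalar -scalemxAl -map_mxM PVP.
  by rewrite map_mx1 scalemx1 !map_mxM.
by rewrite !det_mulmx mulrAC -det_mulmx -map_mxM PVP map_mx1 det1 mul1r.
Qed.

Section UnitaryConjugation.
Variable R : rcfType.
Local Notation C := R[i].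
Local Open Scope complex_scope.
Local Open Scope sesquilinear_scope.

Definition sqnormc (z : C) : R := complex.Re (z * z^*).

Lemma sqnormcE (z : C) : (sqnormc z)%:C = z * z^*.
Proof. by case: z => a b; rewrite /sqnormc; simpc; rewrite [b * a]mulrC addNr. Qed.

Lemma sqnormc_ge0 (z : C) : 0 <= sqnormc z.
Proof. by rewrite -ler0c sqnormcE mulcJ_ge0. Qed.

Lemma sqnormc_nat (b : bool) : sqnormc b%:R = b%:R.
Proof. by case: b; rewrite /sqnormc /= ?(mul0r, mulr1, subr0). Qed.

Lemma diag_form (k : nat) (w : 'rV[C]_k) (d : 'rV[R]_k) :
  (w *m diag_mx (map_mx (real_complex R) d) *m w ^t*) 0 0 =
  (\sum_l sqnormc (w 0 l) * d 0 l)%:C.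
Proof.
rewrite mul_mx_diag !mxE rmorph_sum; apply: eq_bigr => l _.
by rewrite !mxE rmorphM /= sqnormcE; ring.
Qed.

Lemma row_form_conj_diag (k : nat) (U V : 'M[C]_k) (d : 'rV[R]_k) (j : 'I_k) :
  (row j U *m (V ^t* *m diag_mx (map_mx (real_complex R) d) *m V) *m (row j U) ^t*) 0 0
  = (\sum_l sqnormc ((U *m V ^t*) j l) * d 0 l)%:C.
Proof.
set D := diag_mx _.
have -> : row j U *m (V ^t* *m D *m V) *m (row j U) ^t* =
          row j (U *m V ^t*) *m D *m (row j (U *m V ^t*)) ^t*.
  by rewrite row_mul trmx_mul map_mxM trmxCK !mulmxA.
by rewrite diag_form; congr _%:C; apply: eq_bigr => l _; rewrite mxE.
Qed.

Lemma unitary_sqnormc_doubly_stochastic (k : nat) (W : 'M[C]_k) :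
  W \is unitarymx -> doubly_stochastic (fun j l => sqnormc (W j l)).
Proof.
move=> W_unitary; split=> [j l|j|l]; first exact: sqnormc_ge0.
  apply: (@complexI R); rewrite rmorph_sum rmorph1.
  have := congr1 (fun M : 'M[C]_k => M j j) (unitarymxP W_unitary).
  rewrite !mxE eqxx /= => h; apply: etrans h.
  by apply: eq_bigr => l _; rewrite sqnormcE !mxE.
apply: (@complexI R); rewrite rmorph_sum rmorph1.
have := congr1 (fun M : 'M[C]_k => M l l) (mulmx1C (unitarymxP W_unitary)).
rewrite !mxE eqxx /= => h; apply: etrans h.
by apply: eq_bigr => j _; rewrite sqnormcE !mxE mulrC.
Qed.

Lemma eigenvalue_conj_diag (k : nat) (U : 'M[C]_k) (d : 'rV[R]_k) (j : 'I_k) :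
  U \is unitarymx ->
  eigenvalue (U ^t* *m diag_mx (map_mx (real_complex R) d) *m U) (d 0 j)%:C.
Proof.
move=> U_unitary; apply/eigenvalueP; exists (row j U); last first.
  apply/eqP => Uj0; have := congr1 (fun M => M *m U ^t*) Uj0.
  rewrite /= -row_mul (unitarymxP U_unitary) row1 mul0mx => /rowP /(_ j).
  by rewrite !mxE !eqxx /=; apply/eqP; rewrite oner_eq0.
rewrite !mulmxA -row_mul (unitarymxP U_unitary) row1 rowE scalemxAl; congr (_ *m _).
apply/rowP => l; rewrite mul_mx_diag !mxE eqxx.
by case: (l =P j) => [->|_]; rewrite ?mulr1 ?mulr0 ?mul1r ?mul0r.
Qed.

End UnitaryConjugation.

Section SpectralData.
Variable R : realType.
Local Notation C := R[i].
Local Open Scope complex_scope.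
Local Open Scope sesquilinear_scope.
Variable k : nat.
Implicit Types (U V : 'M[C]_k) (d e : 'rV[R]_k).

Local Notation conj_diag U d := (U ^t* *m diag_mx (map_mx (real_complex R) d) *m U).

Lemma loewner_le_conj_diag U V d e (j : 'I_k) :
  U \is unitarymx -> loewner_le (conj_diag U d) (conj_diag V e) ->
  d 0 j <= \sum_l sqnormc ((U *m V ^t*) j l) * e 0 l.
Proof.
move=> U_unitary /(_ (row j U)).
rewrite mulmxBr mulmxBl mxE [X in _ + X]mxE !row_form_conj_diag.
have -> : \sum_l sqnormc ((U *m U ^t*) j l) * d 0 l = d 0 j.
  rewrite (unitarymxP U_unitary) (bigD1 j) //= big1 => [|l lj].
    by rewrite mxE eqxx sqnormc_nat mul1r addr0.
  by rewrite mxE eq_sym (negbTE lj) sqnormc_nat mul0r.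
by rewrite -rmorphB ler0c subr_ge0.
Qed.

Lemma eigs_desc_conj_diag U (a : 'I_k -> R) (s : seq R) :
  U \is unitarymx -> eigs_desc (U ^t* *m diag_mx (\row_l (a l)%:C) *m U) s ->
  perm_eq s [seq a l | l <- enum 'I_k].
Proof.
move=> U_unitary [_ [_ s_char]].
rewrite -(invmx_unitary U_unitary) char_poly_conj ?unitarymx_unit // in s_char.
rewrite char_poly_trig ?diag_mx_is_trig // in s_char.
apply: (@perm_map_inj _ _ (real_complex R) (@complexI R)).
apply: prod_XsubC_eq; rewrite !big_map -s_char.
by apply: eq_bigr => l _; rewrite !mxE eqxx mulr1n.
Qed.

Lemma spec_in_conj_diag_box (n : nat) (I : 'I_n -> interval R) U
    (xs : 'I_n -> 'M[C]_k) (d : 'I_n -> 'rV[R]_k) :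
  U \is unitarymx -> (forall i, xs i = conj_diag U (d i)) ->
  (forall i, spec_in (xs i) (I i)) -> forall l, in_box I (\row_i d i 0 l).
Proof.
move=> U_unitary xsE xsI l i; rewrite mxE.
have := xsI i (d i 0 l)%:C; rewrite xsE.
by move=> /(_ (eigenvalue_conj_diag (d i) l U_unitary)) [r /complexI ->].
Qed.

End SpectralData.

Theorem mainTheorem8 (R : realType) (n m : nat) (I : 'I_n -> interval R)
  (f : 'rV[R]_n -> R) (xs ys : 'I_n -> 'M[R[i]]_m) :
  convex_on_box I f -> sep_increasing I f ->
  abelian_tuple xs -> abelian_tuple ys ->
  (forall i, selfadjoint (xs i)) -> (forall i, selfadjoint (ys i)) ->
  (forall i, spec_in (xs i) (I i)) -> (forall i, spec_in (ys i) (I i)) ->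
  (forall i, loewner_le (xs i) (ys i)) ->
  forall fx fy : 'M[R[i]]_m,
    joint_fcalc f xs fx -> joint_fcalc f ys fy -> weak_major fx fy.
Proof.
(* Commutativity and self-adjointness are already encoded in the joint diagonalisations. *)
move=> f_cvx f_inc _ _ _ _ xsI ysI xy fx fy [U [dx [U_unitary [xsE ->]]]]
  [V [dy [V_unitary [ysE ->]]]] s t fx_eigs fy_eigs k km.
pose W := (U *m V ^t*)%sesqui.
have W_unitary : W \is unitarymx by rewrite mul_unitarymx ?trmxC_unitary.
have dxI := spec_in_conj_diag_box U_unitary xsE xsI.
have dyI := spec_in_conj_diag_box V_unitary ysE ysI.
apply: (doubly_stochastic_weak_major (unitary_sqnormc_doubly_stochastic W_unitary)
  _ (eigs_desc_conj_diag U_unitary fx_eigs) _ (eigs_desc_conj_diag V_unitary fy_eigs) km).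
- move=> j; apply: (sep_increasing_convex_le_mean f_cvx f_inc) => //.
  + by move=> l; apply: sqnormc_ge0.
  + by case: (unitary_sqnormc_doubly_stochastic W_unitary).
  move=> i; have := xy i; rewrite xsE ysE => /(loewner_le_conj_diag j U_unitary).
  by rewrite mxE; under [X in _ -> _ <= X]eq_bigr do rewrite mxE.
by case: fy_eigs => _ [].
Qed.
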